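(* Let $R$ be a finite rack with two decompositions $R=S_1\cup T_1$ and $R=S_2\cup T_2$. If $T_1\cong T_2$ and the subracks $S_1$ and $S_2$ are connected, then $S_1\cong S_2$.
   Context: A rack is a set $R$ with a binary operation $\rhd$ such that every left multiplication $\ell_a\colon b\mapsto a\rhd b$ is a bijection and $a\rhd(b\rhd c)=(a\rhd b)\rhd(a\rhd c)$ for all $a,b,c$. A subrack of $R$ is a subset $S$ with $\ell_s(S)=S$ for all $s\in S$, regarded as a rack with the restricted operation. A decomposition $R=S\cup T$ means that $S$ and $T$ are disjoint non-empty subracks whose union is $R$. The inner automorphism group $\mathrm{Inn}(R)$ is the subgroup of the symmetric group on $R$ generated by all $\ell_a$; a rack is connected if it is non-empty and $\mathrm{Inn}(R)$ acts transitively on it. *)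

From mathcomp Require Import all_boot all_fingroup.
Set Implicit Arguments. Unset Strict Implicit. Unset Printing Implicit Defensive.

Definition is_rack (T : finType) (op : T -> T -> T) : Prop :=
  (forall a, bijective (op a)) /\
  (forall a b c, op a (op b c) = op (op a b) (op a c)).

Definition subrack (T : finType) (op : T -> T -> T) (S : {set T}) : Prop :=
  forall s, s \in S -> op s @: S = S.

Definition decomposition (T : finType) (op : T -> T -> T) (S U : {set T}) : Prop :=
  [/\ subrack op S /\ subrack op U, S != set0, U != set0,
      S :&: U = set0 & S :|: U = [set: T]].

Definition subrack_iso (T : finType) (op : T -> T -> T) (S U : {set T}) : Prop :=
  exists f : T -> T,
    [/\ {in S &, injective f}, f @: S = U &
        {in S &, forall a b, f (op a b) = op (f a) (f b)}].

(* The left multiplication l_s of the subrack S, extended by the identity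
   outside S (so that it is a permutation of T when S is a subrack, s \in S). *)
Definition lmul_on (T : finType) (op : T -> T -> T) (S : {set T}) (s : T) : T -> T :=
  fun x => if x \in S then op s x else x.

(* Inn(S): the group generated by the left multiplications l_s, s \in S,
   as permutations (of T, acting trivially outside S). *)
Definition Inn (T : finType) (op : T -> T -> T) (S : {set T}) : {set {perm T}} :=
  (<<[set p : {perm T} | [exists s in S, [forall x, p x == lmul_on op S s x]]]>>)%g.

Definition connected (T : finType) (op : T -> T -> T) (S : {set T}) : Prop :=
  S != set0 /\ [transitive Inn op S, on S | 'P].

From mathcomp Require Import all_boot all_fingroup.

(* Let f be an isomorphism from T1 onto T2.  A connected subrack X has no
   proper non-empty subset stable under the left multiplications by X, this
   property is preserved by injective homomorphisms, and a subrack with this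
   property that meets a component of a decomposition lies inside it, because
   each component is stable under all left multiplications of R.  Since S2 is
   disjoint from T2 = f(T1) and f is injective on T1, the f-orbit of a point of
   S2 must leave T1; for the least k such that f^k(S2) is not inside T1, the map
   f^k is an injective homomorphism on S2 whose image meets S1, hence lies in S1
   and fills it, as |S1| = |R| - |T1| = |R| - |T2| = |S2|. *)

Set Implicit Arguments. Unset Strict Implicit. Unset Printing Implicit Defensive.

Section Racks.

Variables (T : finType) (op : T -> T -> T).

Definition indecomposable (X : {set T}) : Prop :=
  forall Y : {set T}, Y \subset X -> Y != set0 ->
    (forall x y, x \in X -> y \in Y -> op x y \in Y) -> Y = X.

Lemma connected_indecomposable (X : {set T}) :
  connected op X -> indecomposable X.
Proof.
move=> [_ Inn_trans] Y sYX /set0Pn[y yY] Y_stable.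
have Inn_stabY : Inn op X \subset ('N(Y | 'P))%g.
  rewrite gen_subG; apply/subsetP => p; rewrite inE.
  case/existsP => s /andP[sX /forallP p_lmul].
  have pY : p @: Y \subset Y.
    apply/subsetP => _ /imsetP[z zY ->].
    by rewrite (eqP (p_lmul z)) /lmul_on (subsetP sYX z zY) Y_stable.
  have {}pY : p @: Y = Y.
    by apply/eqP; rewrite eqEcard pY (card_imset _ (@perm_inj _ p)) /=.
  by apply/astabsP => z /=; rewrite -{1}pY (mem_imset _ _ (@perm_inj _ p)).
apply/eqP; rewrite eqEsubset sYX -(atransP Inn_trans y (subsetP sYX y yY)).
apply/subsetP => _ /orbitP[p pInn <-].
by rewrite (astabs_act _ (subsetP Inn_stabY p pInn)).
Qed.

Lemma decomposition_setC (S U : {set T}) : decomposition op S U -> S = ~: U.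
Proof.
case=> _ _ _ SU0 SUT.
rewrite -setTD -SUT setDUl setDv setU0.
by apply/esym/setDidPl; rewrite -setI_eq0 SU0.
Qed.

Lemma decomposition_card (S U : {set T}) :
  decomposition op S U -> #|S| = #|T| - #|U|.
Proof. by move/decomposition_setC ->; rewrite -(cardsC U) addKn. Qed.

Hypothesis op_rack : is_rack op.

Lemma op_inj a : injective (op a).
Proof. by apply: bij_inj; case: op_rack. Qed.

Lemma decomposition_mem_op (S U : {set T}) x y :
  decomposition op S U -> (op x y \in S) = (y \in S).
Proof.
move=> dec; have SUC := decomposition_setC dec.
case: dec => [[subS subU] _ _ _ _].
have [xU | xNU] := boolP (x \in U).
  by rewrite SUC !inE -{1}(subU x xU) (mem_imset _ _ (@op_inj x)).
have xS : x \in S by rewrite SUC inE.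
by rewrite -{1}(subS x xS) (mem_imset _ _ (@op_inj x)).
Qed.

Lemma indecomposable_sub_decomposition (S U X : {set T}) :
  decomposition op S U -> subrack op X -> indecomposable X ->
  X :&: S != set0 -> X \subset S.
Proof.
move=> dec subX indX XS0.
suff <- : X :&: S = X by apply: subsetIr.
apply: indX => //; first exact: subsetIl.
move=> x y xX; rewrite !inE (decomposition_mem_op x y dec) => /andP[yX ->].
by rewrite -(subX x xX) imset_f.
Qed.

Section Images.

Variables (A : {set T}) (g : T -> T).
Hypotheses (subA : subrack op A)
  (g_morph : {in A &, forall a b, g (op a b) = op (g a) (g b)}).

Lemma subrack_image : subrack op (g @: A).
Proof.
move=> _ /imsetP[a aA ->]; rewrite -imset_comp -{2}(subA aA) -imset_comp.
by apply: eq_in_imset => b bA /=; rewrite g_morph.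
Qed.

Lemma indecomposable_image : indecomposable A -> indecomposable (g @: A).
Proof.
move=> indA Y sYgA /set0Pn[y0 y0Y] Y_stable.
case/imsetP: (subsetP sYgA y0 y0Y) => a0 a0A y0_eq.
pose Z := [set a in A | g a \in Y].
have ZA : Z = A.
  apply: indA; first by apply/subsetP => a; rewrite inE => /andP[].
    by apply/set0Pn; exists a0; rewrite inE a0A -y0_eq.
  move=> x y xA; rewrite !inE => /andP[yA gyY].
  by rewrite -(subA xA) imset_f //= g_morph // Y_stable // imset_f.
apply/eqP; rewrite eqEsubset sYgA; apply/subsetP => _ /imsetP[a + ->].
by rewrite -ZA inE => /andP[].
Qed.

Lemma subrack_iso_sym (B : {set T}) : subrack_iso op A B -> subrack_iso op B A.
Proof.
case=> h [h_inj <- h_morph].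
pose h' b := odflt b [pick a in A | h a == b].
have h'K : {in A, cancel h h'}.
  move=> a aA; rewrite /h'; case: pickP => [a' /andP[a'A /eqP] | /(_ a)] /=.
    exact: h_inj.
  by rewrite aA eqxx.
exists h'; split.
- by move=> _ _ /imsetP[a aA ->] /imsetP[b bA ->]; rewrite !h'K // => ->.
- apply/eqP; rewrite eqEsubset; apply/andP; split; apply/subsetP.
    by move=> _ /imsetP[_ /imsetP[a aA ->] ->]; rewrite h'K.
  by move=> a aA; apply/imsetP; exists (h a); rewrite ?imset_f ?h'K.
- move=> _ _ /imsetP[a aA ->] /imsetP[b bA ->].
  have abA : op a b \in A by rewrite -(subA aA) imset_f.
  by rewrite -h_morph // !h'K.
Qed.

End Images.

End Racks.

Section Iterates.

Variables (T : finType) (f : T -> T) (D : {set T}).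
Hypothesis f_inj : {in D &, injective f}.

Lemma iter_cancel_in x i j :
  (forall m, m <= i + j -> iter m f x \in D) ->
  iter (i + j) f x = iter i f x -> iter j f x = x.
Proof.
elim: i => [|i IHi] stay; first by rewrite add0n.
rewrite addSn !iterS => /f_inj eq_ij; apply: IHi => [m mij|].
  by apply: stay; rewrite addSn leqW.
by apply: eq_ij; apply: stay; rewrite ?addSn ?leqW // leq_addr.
Qed.

Lemma iter_exit x : x \notin f @: D -> exists k, iter k f x \notin D.
Proof.
move=> xNfD; set n := fingraph.order f x.
have [k kND | all_in] := pickP (fun k : 'I_n.+1 => iter k f x \notin D).
  by exists k.
have stay m : m <= n -> iter m f x \in D.
  by rewrite -ltnS => mn; apply: negbFE (all_in (Ordinal mn)).
have /trajectP[i i_lt_n loop_i] := looping_order f x.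
have n_eq : n = i + (n - i).-1.+1.
  by rewrite prednK ?subn_gt0 // subnKC // ltnW.
have x_eq : iter (n - i).-1.+1 f x = x.
  by apply: (iter_cancel_in (i := i)); rewrite -n_eq.
case/negP: xNfD; rewrite -x_eq iterS imset_f // stay //.
exact: leq_trans (leq_pred _) (leq_subr _ _).
Qed.

Variables (A : {set T}) (k : nat).
Hypothesis stay : forall i a, i < k -> a \in A -> iter i f a \in D.

Lemma iter_inj_in : {in A &, injective (iter k f)}.
Proof.
elim: k stay => [|m IHm] stay_m a b aA bA //= /f_inj eq_ab.
apply: IHm => // [i c im|]; first by apply: stay_m; apply: ltnW.
by apply: eq_ab; apply: stay_m.
Qed.

Lemma iter_morph_in (op : T -> T -> T) :
  {in D &, forall a b, f (op a b) = op (f a) (f b)} ->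
  {in A &, forall a b, iter k f (op a b) = op (iter k f a) (iter k f b)}.
Proof.
move=> f_morph; elim: k stay => [|m IHm] stay_m a b aA bA //=.
have stay' i c : i < m -> c \in A -> iter i f c \in D.
  by move=> im; apply: stay_m; apply: ltnW.
by rewrite IHm // f_morph ?stay_m.
Qed.

End Iterates.

Theorem corollary4p3 (T : finType) (op : T -> T -> T) (S1 T1 S2 T2 : {set T}) :
  is_rack op ->
  decomposition op S1 T1 -> decomposition op S2 T2 ->
  subrack_iso op T1 T2 ->
  connected op S1 -> connected op S2 ->
  subrack_iso op S1 S2.
Proof.
move=> rack dec1 dec2 [f [f_inj fT1 f_morph]] _ conn2.
have [[subS2 _] /set0Pn[x xS2] _ _ _] := dec2.
apply: (subrack_iso_sym subS2).
have x_exit : x \notin f @: T1.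
  by move: xS2; rewrite fT1 (decomposition_setC dec2) inE.
have escape : exists k, ~~ (iter k f @: S2 \subset T1).
  have [k kNT1] := iter_exit f_inj x_exit.
  by exists k; apply/subsetPn; exists (iter k f x); rewrite ?imset_f.
case: (ex_minnP escape) => k /subsetPn[y yfS2 yNT1] min_k.
have stay i a : i < k -> a \in S2 -> iter i f a \in T1.
  move=> ik aS2; apply: contraTT ik => aNT1; rewrite -leqNgt; apply: min_k.
  by apply/subsetPn; exists (iter i f a); rewrite ?imset_f.
have g_inj := iter_inj_in f_inj stay.
have g_morph := iter_morph_in stay f_morph.
have gS2_S1 : iter k f @: S2 \subset S1.
  apply: (indecomposable_sub_decomposition rack dec1).
  - exact: subrack_image.
  - exact/indecomposable_image/connected_indecomposable.
  - by apply/set0Pn; exists y; rewrite inE yfS2 (decomposition_setC dec1) inE.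
exists (iter k f); split => //.
apply/eqP; rewrite eqEcard gS2_S1 card_in_imset //.
rewrite (decomposition_card dec1) (decomposition_card dec2) -fT1.
by rewrite card_in_imset /=.
Qed.
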